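(* Let $G$ be a group, $X=\{1,\dots,d\}$, and $\psi:G\to S_d\ltimes G^d$ a homomorphism (wreath recursion). For $n\ge0$ let $K_n$ be the set of $g\in G$ such that $g(v)=v$ and $g|_v=1$ for all $v\in X^n$. Then $K_n\supseteq K_{n-1}$. If $\bigcup_{n\ge0}K_n$ equals the kernel of the action of $G$ on $X^*$ (i.e., of the epimorphism $G\to\overline{G}$), then the natural epimorphism $\mathcal{V}_\psi\to\mathcal{V}_{\overline{G}}$ is an isomorphism.
   Context: Elements of $S_d\ltimes G^d$ are written $\sigma(g_1,\dots,g_d)$ with multiplication $\sigma(g_1,\ldots,g_d)\pi(h_1,\ldots,h_d)=\sigma\pi(g_{\pi(1)}h_1,\ldots,g_{\pi(d)}h_d)$. The homomorphism $\psi$ defines an action of $G$ on the rooted tree $X^*$ of finite words by $g(xw)=\sigma(x)g_x(w)$ where $\psi(g)=\sigma(g_1,\ldots,g_d)$, and sections $g|_v\in G$ by $g|_x=g_x$ and $g|_{xv}=(g|_x)|_v$, so that $g(vw)=g(v)g|_v(w)$. $\overline{G}$ is the quotient of $G$ by the kernel of this action (a self-similar group acting faithfully on $X^*$). A complete antichain is a finite set of words in $X^*$, none a prefix of another, such that every infinite sequence has exactly one of them as prefix. $\mathcal{V}_\psi$ is the group of equivalence classes of tables $\begin{pmatrix}v_1&\cdots&v_n\\ g_1&\cdots&g_n\\ u_1&\cdots&u_n\end{pmatrix}$ with $g_i\in G$ and $\{v_i\}$, $\{u_i\}$ complete antichains, where tables are equivalent if they become equal up to permutation of columns after iteratively replacing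 a column $(v,g,u)$ by the $d$ columns $(vi,\ g_i,\ u\sigma(i))$, $i=1,\ldots,d$, with $\psi(g)=\sigma(g_1,\ldots,g_d)$; multiplication is $(w_i,g_i,u_i)_i\cdot(v_i,h_i,w_i)_i=(v_i,g_ih_i,u_i)_i$ (after bringing tables to matching form). $\mathcal{V}_{\overline{G}}$ is defined in the same way with $\overline{G}$ (equivalently, the group of homeomorphisms $g$ of $X^\omega$ with $g(v_iw)=u_i\bar g_i(w)$), and the natural epimorphism replaces each $g_i$ by its image in $\overline{G}$. *)

From HB Require Import structures.
From mathcomp Require Import all_boot perm.
From Stdlib Require Import Permutation.

Set Implicit Arguments.
Unset Strict Implicit.
Unset Printing Implicit Defensive.

Record AbsGroup := {
  gcar :> Type;
  gmul : gcar -> gcar -> gcar;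
  gone : gcar;
  ginv : gcar -> gcar;
  gmulA : forall x y z, gmul x (gmul y z) = gmul (gmul x y) z;
  gmul1g : forall x, gmul gone x = x;
  gmulVg : forall x, gmul (ginv x) x = gone }.

(* Words over X = 'I_d (X = {1..d} reindexed as {0..d-1}). *)
Definition word (d : nat) := seq 'I_d.

(* psi : G -> S_d ⋉ G^d, psi(g) = sg g (sc g 1, ..., sc g d), is a homomorphism
   for the multiplication
   σ(g_1..g_d) π(h_1..h_d) = σπ(g_{π(1)} h_1, ..., g_{π(d)} h_d),
   where σπ is the composite x |-> σ(π(x)). *)
Definition is_wreath_hom (G : AbsGroup) (d : nat)
  (sg : G -> {perm 'I_d}) (sc : G -> 'I_d -> G) : Prop :=
  forall g h : G,
    (forall x, sg (gmul g h) x = sg g (sg h x)) /\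
    (forall x, sc (gmul g h) x = gmul (sc g (sg h x)) (sc h x)).

Section Action.
Variables (G : AbsGroup) (d : nat) (sg : G -> {perm 'I_d}) (sc : G -> 'I_d -> G).

Fixpoint act (g : G) (w : word d) : word d :=
  match w with
  | [::] => [::]
  | x :: w' => sg g x :: act (sc g x) w'
  end.

Fixpoint secw (g : G) (v : word d) : G :=
  match v with
  | [::] => g
  | x :: v' => secw (sc g x) v'
  end.

Definition Kn (n : nat) (g : G) : Prop :=
  forall v : word d, size v = n -> act g v = v /\ secw g v = gone G.

Definition in_kernel (g : G) : Prop := forall w : word d, act g w = w.

End Action.

Section Tables.
Variable d : nat.

Definition prefix_inf (v : word d) (s : nat -> 'I_d) : Prop :=
  v = mkseq s (size v).

Definition complete_antichain (A : seq (word d)) : Prop :=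
  [/\ uniq A,
      (forall v w, v \in A -> w \in A -> prefix v w -> v = w),
      (forall s : nat -> 'I_d, exists v, v \in A /\ prefix_inf v s) &
      (forall (s : nat -> 'I_d) v w, v \in A -> w \in A ->
          prefix_inf v s -> prefix_inf w s -> v = w)].

Variable A : Type.

(* a table: list of columns (v_i, g_i, u_i) *)
Definition table := seq (word d * A * word d).

Definition top_row (T : table) : seq (word d) := [seq c.1.1 | c <- T].
Definition bot_row (T : table) : seq (word d) := [seq c.2 | c <- T].

Definition valid_table (T : table) : Prop :=
  complete_antichain (top_row T) /\ complete_antichain (bot_row T).

Variables (lp : A -> 'I_d -> 'I_d) (sc : A -> 'I_d -> A).

Definition expand_col (c : word d * A * word d) : table :=
  let: (v, g, u) := c in
  [seq (rcons v x, sc g x, rcons u (lp g x)) | x <- enum 'I_d].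

Inductive expands : table -> table -> Prop :=
  | expands_refl T : expands T T
  | expands_step l c r T' :
      expands (l ++ expand_col c ++ r) T' -> expands (l ++ c :: r) T'.

Definition tab_equiv (T1 T2 : table) : Prop :=
  exists T1' T2', [/\ expands T1 T1', expands T2 T2' & Permutation T1' T2'].

End Tables.

Section Gbar.
Variables (G : AbsGroup) (d : nat) (sg : G -> {perm 'I_d}) (sc : G -> 'I_d -> G).

(* Gbar = image of G in the group of maps of X^* (G modulo the kernel) *)
Definition Gbar := { f : word d -> word d | exists g : G, forall w, f w = act sg sc g w }.

Lemma gbar_sec_proof (f : Gbar) (x : 'I_d) :
  exists g : G, forall w, behead (proj1_sig f (x :: w)) = act sg sc g w.
Proof.
case: f => f [g Hg] /=; exists (sc g x) => w; by rewrite Hg.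
Qed.

Definition gbar_sec (f : Gbar) (x : 'I_d) : Gbar :=
  exist _ (fun w => behead (proj1_sig f (x :: w))) (gbar_sec_proof f x).

Definition gbar_lp (f : Gbar) (x : 'I_d) : 'I_d := head x (proj1_sig f [:: x]).

Definition gbar_pi (g : G) : Gbar :=
  exist _ (act sg sc g) (ex_intro _ g (fun w => erefl)).

Definition map_table_pi (T : table d G) : table d Gbar :=
  [seq (c.1.1, gbar_pi c.1.2, c.2) | c <- T].

End Gbar.

From HB Require Import structures.
From mathcomp Require Import all_boot perm.
From Stdlib Require Import Permutation.
From Stdlib Require Import ProofIrrelevance FunctionalExtensionality.

Set Implicit Arguments.
Unset Strict Implicit.
Unset Printing Implicit Defensive.

(* Proof of Proposition 3.9.
   The inclusion K_n ⊆ K_{n+1} is immediate from g(vx) = g(v) g|_v(x) and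
   g|_{vx} = (g|_v)|_x.  For the isomorphism V_psi ≅ V_Gbar we work with
   tables directly.  The projection G -> Gbar commutes with column expansion,
   so it maps expansions to expansions (hence equivalent tables to equivalent
   tables), and every expansion of a projected table lifts to an expansion of
   the original table.  The key point for injectivity is that if two columns
   (v,g,u), (v,h,u) have the same image in Gbar, then g h^-1 acts trivially,
   so by hypothesis it lies in some K_n; multiplying the entry of a column by
   an element of K_n does not change its uniform expansion to depth n.  Hence
   two tables whose images are equal up to permutation become equal up to
   permutation after expanding every column to a common large depth.
   Surjectivity on tables is clear since G -> Gbar is onto. *)

Section GroupFacts.
Variable G : AbsGroup.

Lemma gmul_idem_one (e : G) : gmul e e = e -> e = gone G.
Proof.
move=> Hee; have: gmul (ginv e) (gmul e e) = gmul (ginv e) e by rewrite Hee.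
by rewrite gmulA gmulVg gmul1g.
Qed.

Lemma gmulgV (x : G) : gmul x (ginv x) = gone G.
Proof.
by apply: gmul_idem_one; rewrite -gmulA [gmul (ginv x) _]gmulA gmulVg gmul1g.
Qed.

Lemma gmulg1 (x : G) : gmul x (gone G) = x.
Proof. by rewrite -(gmulVg x) gmulA gmulgV gmul1g. Qed.

End GroupFacts.

Section WreathAction.
Variables (G : AbsGroup) (d : nat) (sg : G -> {perm 'I_d}) (sc : G -> 'I_d -> G).
Hypothesis Hpsi : is_wreath_hom sg sc.

Lemma sg_one x : sg (gone G) x = x.
Proof.
have [Hsg _] := Hpsi (gone G) (gone G).
by have := Hsg x; rewrite gmul1g => /perm_inj.
Qed.

Lemma sc_one x : sc (gone G) x = gone G.
Proof.
have [_ Hsc] := Hpsi (gone G) (gone G).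
by have := Hsc x; rewrite gmul1g sg_one => E; apply: gmul_idem_one; rewrite -E.
Qed.

Lemma act_one w : act sg sc (gone G) w = w.
Proof. by elim: w => [|x w IH] //=; rewrite sg_one sc_one IH. Qed.

Lemma act_mul g h w : act sg sc (gmul g h) w = act sg sc g (act sg sc h w).
Proof.
elim: w g h => [|x w IH] g h //=.
by have [Hsg Hsc] := Hpsi g h; rewrite Hsg Hsc IH.
Qed.

Lemma act_rcons g v x :
  act sg sc g (rcons v x) = rcons (act sg sc g v) (sg (secw sc g v) x).
Proof. by elim: v g => [|y v IH] g //=; rewrite IH. Qed.

Lemma secw_rcons g v x : secw sc g (rcons v x) = sc (secw sc g v) x.
Proof. by elim: v g => [|y v IH] g /=. Qed.

Lemma Kn_succ n g : Kn sg sc n g -> Kn sg sc n.+1 g.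
Proof.
move=> HK v; case/lastP: v => [|v x] //; rewrite size_rcons => -[] Hv.
have [Eact Esec] := HK v Hv.
by rewrite act_rcons secw_rcons Eact Esec sg_one sc_one.
Qed.

Lemma Kn_monotone n N g : n <= N -> Kn sg sc n g -> Kn sg sc N g.
Proof.
elim: N => [|N IH]; first by rewrite leqn0 => /eqP ->.
rewrite leq_eqVlt => /orP [/eqP -> //|]; rewrite ltnS => HnN HK.
exact/Kn_succ/IH.
Qed.

Lemma Kn_cons N k : Kn sg sc N.+1 k -> forall y, sg k y = y /\ Kn sg sc N (sc k y).
Proof.
move=> HK y; split.
  have Hsize : size (y :: nseq N y) = N.+1 by rewrite /= size_nseq.
  by have [[->] _] := HK _ Hsize.
move=> w Hw; have Hsize : size (y :: w) = N.+1 by rewrite /= Hw.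
by have [[_ ->] /= ->] := HK _ Hsize.
Qed.

End WreathAction.

Section Expansions.
Variables (d : nat) (A : Type) (lp : A -> 'I_d -> 'I_d) (sc : A -> 'I_d -> A).

Fixpoint expand_depth (n : nat) (c : word d * A * word d) : table d A :=
  if n is n'.+1 then flatten (map (expand_depth n') (expand_col lp sc c))
  else [:: c].

Lemma expands_trans T1 T2 T3 :
  expands lp sc T1 T2 -> expands lp sc T2 T3 -> expands lp sc T1 T3.
Proof. by elim => [//|l c r T' _ IH] H; apply: expands_step; apply: IH. Qed.

Lemma expands_congr M M' l r :
  expands lp sc M M' -> expands lp sc (l ++ M ++ r) (l ++ M' ++ r).
Proof.
elim => [T|l0 c r0 T' _ IH]; first exact: expands_refl.
have -> : l ++ (l0 ++ c :: r0) ++ r = (l ++ l0) ++ c :: (r0 ++ r) by rewrite -!catA.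
apply: expands_step.
by have <- : l ++ (l0 ++ expand_col lp sc c ++ r0) ++ r
          = (l ++ l0) ++ expand_col lp sc c ++ (r0 ++ r) by rewrite -!catA.
Qed.

Lemma expands_flatten (F : word d * A * word d -> table d A) T :
  (forall c, expands lp sc [:: c] (F c)) -> expands lp sc T (flatten (map F T)).
Proof.
move=> HF; elim: T => [|c T IH] /=; first exact: expands_refl.
apply: (@expands_trans _ (F c ++ T)); first exact: (expands_congr [::] T (HF c)).
by have := expands_congr (F c) [::] IH; rewrite !cats0.
Qed.

Lemma expands_depth n c : expands lp sc [:: c] (expand_depth n c).
Proof.
elim: n c => [|n IH] c /=; first exact: expands_refl.
apply: (@expands_trans _ (expand_col lp sc c)); last exact: expands_flatten.
have := @expands_step _ _ lp sc [::] c [::] (expand_col lp sc c).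
by rewrite /= cats0; apply; apply: expands_refl.
Qed.

End Expansions.

Lemma perm_flatten_eventually (A B C : Type) (f : A -> B) (E : nat -> A -> seq C)
    (L1 L2 : seq A) :
  Permutation (map f L1) (map f L2) ->
  (forall a b, List.In a L1 -> List.In b L2 -> f a = f b ->
     exists n, forall N, n <= N -> E N a = E N b) ->
  exists n, forall N, n <= N ->
    Permutation (flatten (map (E N) L1)) (flatten (map (E N) L2)).
Proof.
elim: L1 L2 => [|a L1 IH] L2 HP Hab.
  by have := Permutation_nil HP; case: L2 {HP Hab} => // _; exists 0.
have [b [Eb Hb]] : exists b, f b = f a /\ List.In b L2.
  by apply/List.in_map_iff/(Permutation_in _ HP); left.
have [B1 [B2 EL2]] := List.in_split _ _ Hb.
have {}EL2 : L2 = B1 ++ b :: B2 by []; subst L2.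
have HP' : Permutation (map f L1) (map f (B1 ++ B2)).
  rewrite map_cat; apply: (@Permutation_cons_app_inv _ _ _ _ (f a)).
  by move: HP; rewrite map_cat /= Eb.
have [n1 Hn1] : exists n, forall N, n <= N ->
    Permutation (flatten (map (E N) L1)) (flatten (map (E N) (B1 ++ B2))).
  apply: IH => // a' b' Ha' Hb'; apply: Hab; first by right.
  apply/List.in_or_app.
  by have [Hb1|Hb2] := List.in_app_or _ _ _ Hb'; [left | right; right].
have [n2 Hn2] := Hab a b (or_introl erefl) Hb (esym Eb).
exists (maxn n1 n2) => N; rewrite geq_max => /andP [HN1 HN2].
rewrite /= Hn2 // !map_cat !flatten_cat /=.
apply: Permutation_trans (Permutation_app_head _ (Hn1 N HN1)) _.
by rewrite map_cat flatten_cat; apply/Permutation_sym/Permutation_app_swap_app.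
Qed.

Section Projection.
Variables (G : AbsGroup) (d : nat) (sg : G -> {perm 'I_d}) (sc : G -> 'I_d -> G).
Hypothesis Hpsi : is_wreath_hom sg sc.

Local Notation Gbar := (Gbar sg sc).
Local Notation lpbar := (@gbar_lp G d sg sc).
Local Notation scbar := (@gbar_sec G d sg sc).

Definition lpG (g : G) (x : 'I_d) : 'I_d := sg g x.

Definition pi_col (c : word d * G * word d) : word d * Gbar * word d :=
  (c.1.1, gbar_pi sg sc c.1.2, c.2).

Lemma gbar_val_inj (f1 f2 : Gbar) : proj1_sig f1 = proj1_sig f2 -> f1 = f2.
Proof.
case: f1 f2 => p1 h1 [p2 h2] /= E; subst p2.
by rewrite (proof_irrelevance _ h1 h2).
Qed.

Lemma pi_expand_col c :
  map_table_pi sg sc (expand_col lpG sc c) = expand_col lpbar scbar (pi_col c).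
Proof.
case: c => [[v g] u]; rewrite /map_table_pi /expand_col -map_comp /=.
by apply: eq_map => x /=; congr (_, _, _); apply: gbar_val_inj.
Qed.

Lemma map_table_pi_cat T1 T2 :
  map_table_pi sg sc (T1 ++ T2) = map_table_pi sg sc T1 ++ map_table_pi sg sc T2.
Proof. exact: map_cat. Qed.

Lemma pi_expands T T' : expands lpG sc T T' ->
  expands lpbar scbar (map_table_pi sg sc T) (map_table_pi sg sc T').
Proof.
elim => [T0|l c r T0 _ IH]; first exact: expands_refl.
rewrite map_table_pi_cat /=; apply: expands_step.
by rewrite map_table_pi_cat map_table_pi_cat pi_expand_col in IH.
Qed.

Lemma map_table_pi_split (T : table d G) l c r :
  map_table_pi sg sc T = l ++ c :: r ->
  exists lT cT rT, [/\ T = lT ++ cT :: rT, map_table_pi sg sc lT = l,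
                       pi_col cT = c & map_table_pi sg sc rT = r].
Proof.
elim: l T => [|c0 l IH] [|cT T] //= [E1 E2]; first by exists [::], cT, T.
have [lT [cT' [rT [-> H1 H2 H3]]]] := IH _ E2.
by exists (cT :: lT), cT', rT; split; rewrite // /map_table_pi /= -E1 -H1.
Qed.

Lemma lift_expands T S :
  expands lpbar scbar (map_table_pi sg sc T) S ->
  exists T', expands lpG sc T T' /\ map_table_pi sg sc T' = S.
Proof.
move=> H; remember (map_table_pi sg sc T) as X eqn:EX; elim: H T EX.
  by move=> T0 T ->; exists T; split; first exact: expands_refl.
move=> l c r T' _ IH T EX.
have [lT [cT [rT [ET El Ec Er]]]] := map_table_pi_split (esym EX).
have [T2 [HT2 ET2]] : exists T2, expands lpG sc (lT ++ expand_col lpG sc cT ++ rT) T2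
                         /\ map_table_pi sg sc T2 = T'.
  by apply: IH; rewrite !map_table_pi_cat pi_expand_col El Ec Er.
by exists T2; split; rewrite // ET; apply: expands_step.
Qed.

Lemma map_table_pi_surj (S : table d Gbar) : exists T, map_table_pi sg sc T = S.
Proof.
elim: S => [|[[v [p [g Hg]]] u] S [T ET]]; first by exists [::].
exists ((v, g, u) :: T); rewrite /map_table_pi /= -ET; congr cons.
by congr (_, _, _); apply: gbar_val_inj; apply: functional_extensionality => w /=.
Qed.

Lemma valid_table_pi T : valid_table (map_table_pi sg sc T) <-> valid_table T.
Proof. by rewrite /valid_table /top_row /bot_row /map_table_pi -!map_comp. Qed.

Lemma expand_depth_Kn N k g v u : Kn sg sc N k ->
  expand_depth lpG sc N (v, gmul k g, u) = expand_depth lpG sc N (v, g, u).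
Proof.
elim: N k g v u => [|N IH] k g v u HK /=.
  by have [_ /= ->] := HK [::] erefl; rewrite gmul1g.
congr flatten; rewrite /expand_col -!map_comp; apply: eq_map => x /=.
have [Hsg Hsc] := Hpsi k g; have [Efix HKsec] := Kn_cons HK (sg g x).
by rewrite /lpG Hsg Hsc Efix (IH _ _ _ _ HKsec).
Qed.

Hypothesis Hker : forall g : G, in_kernel sg sc g <-> exists n, Kn sg sc n g.

(* Columns with the same image in Gbar have equal expansions at all large
   depths: this is where the hypothesis on the kernel is used. *)
Lemma expand_depth_same_image a b : pi_col a = pi_col b ->
  exists n, forall N, n <= N -> expand_depth lpG sc N a = expand_depth lpG sc N b.
Proof.
case: a b => [[v g] u] [[v' h] u'] [-> Eact ->].
have Hk : in_kernel sg sc (gmul g (ginv h)).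
  move=> w; rewrite (act_mul Hpsi) Eact -(act_mul Hpsi) gmulgV.
  exact: (act_one Hpsi).
have [n HKn] := (Hker _).1 Hk; exists n => N HnN.
have -> : g = gmul (gmul g (ginv h)) h by rewrite -gmulA gmulVg gmulg1.
by apply: expand_depth_Kn; apply: Kn_monotone HnN HKn.
Qed.

Lemma tab_equiv_lift T1 T2 :
  tab_equiv lpbar scbar (map_table_pi sg sc T1) (map_table_pi sg sc T2) ->
  tab_equiv lpG sc T1 T2.
Proof.
move=> [S1 [S2 [H1 H2 HP]]].
have [T1' [E1 M1]] := lift_expands H1.
have [T2' [E2 M2]] := lift_expands H2.
subst S1 S2.
have [n Hn] := @perm_flatten_eventually _ _ _ pi_col (expand_depth lpG sc) T1' T2'
  HP (fun a b _ _ => @expand_depth_same_image a b).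
exists (flatten (map (expand_depth lpG sc n) T1')),
       (flatten (map (expand_depth lpG sc n) T2')); split; last exact: Hn.
- by apply: expands_trans E1 _; apply: expands_flatten => c; apply: expands_depth.
- by apply: expands_trans E2 _; apply: expands_flatten => c; apply: expands_depth.
Qed.

End Projection.

Theorem proposition3p9 (G : AbsGroup) (d : nat)
  (sg : G -> {perm 'I_d}) (sc : G -> 'I_d -> G)
  (Hpsi : is_wreath_hom sg sc) :
  (forall (n : nat) (g : G), Kn sg sc n g -> Kn sg sc n.+1 g) /\
  ((forall g : G, in_kernel sg sc g <-> exists n, Kn sg sc n g) ->
   (forall T1 T2 : table d G, valid_table T1 -> valid_table T2 ->
      (tab_equiv (fun g x => sg g x) sc T1 T2 <->
       tab_equiv (@gbar_lp G d sg sc) (@gbar_sec G d sg sc)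
                 (map_table_pi sg sc T1) (map_table_pi sg sc T2))) /\
   (forall S : table d (Gbar sg sc), valid_table S ->
      exists T : table d G, valid_table T /\ map_table_pi sg sc T = S)).
Proof.
split; first exact: Kn_succ.
move=> Hker; split.
  move=> T1 T2 _ _; split; last exact: tab_equiv_lift.
  move=> [T1' [T2' [H1 H2 HP]]].
  exists (map_table_pi sg sc T1'), (map_table_pi sg sc T2').
  by split; [apply: pi_expands | apply: pi_expands | apply: Permutation_map].
move=> S HS; have [T ET] := map_table_pi_surj S.
by exists T; split => //; move: HS; rewrite -ET => /valid_table_pi.
Qed.
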